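(* Let $L\subseteq G_3$ be the subgroup of elements that fix every edge sticker and send every corner cubelet back to its own position. Let $\sigma:S_8\to S_{12}$ be the sign map sending even permutations to the identity and odd permutations to the transposition $(b\,c)$ of the edge positions $b,c$, and let $S=\{(\sigma(p),p):p\in S_8\}\subseteq S_{12}\times S_8$. Then $G_3$ contains a subgroup of the form $L\rtimes Q_S$, where $Q_S\subseteq G_3$ is a subgroup with $Q_S\cap\ker\alpha=1$ and $\alpha(Q_S)=S$, and $\psi$ restricts to an isomorphism from $L\rtimes Q_S$ onto $G_2$. In particular the surjection $\psi:G_3\to G_2$ splits and $G_2$ is isomorphic to a subgroup of $G_3$.
   Context: The $3\times3\times3$ Rubik's cube consists of 8 corner cubelets (3 stickers each), 12 edge cubelets (2 stickers each) and 6 face-center cubelets. Corner positions are numbered 1 = top-front-left, 2 = top-front-right, 3 = top-back-left, 4 = top-back-right, 5 = bottom-front-left, 6 = bottom-front-right, 7 = bottom-back-left, 8 = bottom-back-right; edge positions are labeled $a$ = top-back, $b$ = top-right, $c$ = top-front, $d$ = top-left, $e$ = back-left, $f$ = back-right, $g$ = front-right, $h$ = front-left, $i$ = bottom-back, $j$ = bottom-right, $k$ = bottom-front, $l$ = bottom-left. $G_3$ is the group of permutations of the 48 corner and edge stickers generated by the six moves $u_3,d_3,f_3,b_3,l_3,r_3$, which rotate respectively the top, bottom, front, back, left, right layer of nine cubelets by $90^\circ$ clockwise as seen by an observer outside the cube facing that face. The $2\times2\times2$ cube has 8 corner cubelets (24 stickers) with the same corner numbering, and $G_2$ is the group of permutations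 of its 24 stickers generated by the analogous face quarter-turns $u_2,d_2,f_2,b_2,l_2,r_2$. $\psi:G_3\to G_2$ is the (surjective) homomorphism with $u_3\mapsto u_2$, $d_3\mapsto d_2$, etc. (it records the action on the corner stickers). $\phi:G_2\to S_8$ records the permutation of corner positions, $\beta:G_3\to S_{12}$ records the permutation of the edge positions $\{a,\dots,l\}$, and $\alpha=(\beta,\phi\circ\psi):G_3\to S_{12}\times S_8$. *)

From mathcomp Require Import all_boot all_fingroup.
From Stdlib Require Import ZArith.
Set Implicit Arguments. Unset Strict Implicit. Unset Printing Implicit Defensive.

(* Geometry.  The cube is [-1,1]^3 with x = right, y = up, z = front  *)
(* (towards the viewer): a right-handed frame.  A coordinate in       *)
(* {-1,0,1} is encoded by i : 'I_3 as the integer i - 1.              *)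

Definition vec := ('I_3 * 'I_3 * 'I_3)%type.

Definition zc (i : 'I_3) : Z := (Z.of_nat (nat_of_ord i) - 1)%Z.
Definition cz (z : Z) : 'I_3 :=
  match z with
  | Zneg _ => @Ordinal 3 0 isT
  | Z0 => @Ordinal 3 1 isT
  | Zpos _ => @Ordinal 3 2 isT
  end.

Local Open Scope Z_scope.

Definition vx (v : vec)   : Z := zc v.1.1.
Definition vy (v : vec)   : Z := zc v.1.2.
Definition vz (v : vec)   : Z := zc v.2.
Definition mkv (x y z   : Z) : vec := (cz x, cz y, cz z).

Definition dot (v w : vec)   : Z := vx v * vx w + vy v * vy w + vz v * vz w.

Definition nzc (v : vec) : nat :=
  addn (addn (nat_of_bool (~~ Z.eqb (vx v) 0)) (nat_of_bool (~~ Z.eqb (vy v) 0))) (nat_of_bool (~~ Z.eqb (vz v) 0)).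

(* Rotation by 90 degrees CLOCKWISE as seen from outside the cube,    *)
(* looking at the face with outward unit normal m, i.e. rotation by   *)
(* -90 degrees about the axis m:  v |-> v x m + m (m . v).            *)
Definition rot90 (m v : vec) : vec :=
  let d := dot m v in
  mkv (vy v * vz m - vz v * vy m + vx m * d)
      (vz v * vx m - vx v * vz m + vy m * d)
      (vx v * vy m - vy v * vx m + vz m * d).

(* A sticker is a pair (p, n): p the position of the cubelet carrying *)
(* it, n the outward unit normal of the sticker.  k = number of       *)
(* nonzero coordinates of p: k = 3 corner cubelets, k = 2 edges.      *)
Definition valid (k : nat) (s : vec * vec) : bool :=
  [&& nzc s.1 == k, nzc s.2 == 1%nat & Z.eqb (dot s.1 s.2) 1].

Definition stk (k : nat) := {s : vec * vec | valid k s}.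
Definition CS := stk 3%nat.   (* the 24 corner stickers (also the 2x2x2 stickers) *)
Definition ES := stk 2%nat.
Definition St3 := (CS + ES)%type.

Definition pos (k : nat) (s : stk k) : vec := (val s).1.

Definition CP := {p : vec | nzc p == 3%nat}.
Definition EP := {p : vec | nzc p == 2%nat}.

(* the permutation defined by f, if f is injective (always the case below) *)
Definition mkperm (T : finType) (f : T -> T) : {perm T} :=
  match injectiveP f with
  | ReflectT h => perm h
  | ReflectF _ => 1%g
  end.

Definition movefun (k : nat) (m : vec) (s : stk k) : stk k :=
  if Z.eqb (dot (val s).1 m) 1 then insubd s (rot90 m (val s).1, rot90 m (val s).2)
  else s.

Definition nU : vec := mkv 0 1 0.
Definition nD : vec := mkv 0 (-1) 0.
Definition nF : vec := mkv 0 0 1.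
Definition nB : vec := mkv 0 0 (-1).
Definition nL : vec := mkv (-1) 0 0.
Definition nR : vec := mkv 1 0 0.

Definition move3 (m : vec) : {perm St3} :=
  mkperm (fun s : St3 => match s with
                         | inl c => inl (movefun m c)
                         | inr e => inr (movefun m e)
                         end).
Definition move2 (m : vec) : {perm CS} := mkperm (@movefun 3 m).

Definition u3 := move3 nU. Definition d3 := move3 nD. Definition f3 := move3 nF.
Definition b3 := move3 nB. Definition l3 := move3 nL. Definition r3 := move3 nR.
Definition u2 := move2 nU. Definition d2 := move2 nD. Definition f2 := move2 nF.
Definition b2 := move2 nB. Definition l2 := move2 nL. Definition r2 := move2 nR.

Definition G3 : {set {perm St3}} := <<[set u3; d3; f3; b3; l3; r3]>>%g.
Definition G2 : {set {perm CS}} := <<[set u2; d2; f2; b2; l2; r2]>>%g.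

Definition psi (g : {perm St3}) : {perm CS} :=
  mkperm (fun c : CS => match g (inl c) with inl c' => c' | inr _ => c end).

Definition phi (h : {perm CS}) : {perm CP} :=
  mkperm (fun p : CP => odflt p
    [pick q : CP | [exists s : CS, (pos s == val p) && (pos (h s) == val q)]]).

Definition beta (g : {perm St3}) : {perm EP} :=
  mkperm (fun p : EP => odflt p
    [pick q : EP | [exists e : ES, (pos e == val p) &&
        (match g (inr e) with inr e' => pos e' == val q | inl _ => false end)]]).

Definition alpha (g : {perm St3}) : {perm EP} * {perm CP} := (beta g, phi (psi g)).

Definition kerAlpha : {set {perm St3}} := [set g in G3 | alpha g == (1%g, 1%g)].

Definition Lsub : {set {perm St3}} :=
  [set g in G3 | [forall e : ES, g (inr e) == inr e] &&
                 [forall c : CS, match g (inl c) with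
                                 | inl c' => pos c' == pos c
                                 | inr _ => false end]].

Lemma posb_subproof : nzc (mkv 1 1 0) == 2%nat. Proof. by vm_compute. Qed.
Lemma posc_subproof : nzc (mkv 0 1 1) == 2%nat. Proof. by vm_compute. Qed.
Definition pos_b : EP := Sub (mkv 1 1 0) posb_subproof.
Definition pos_c : EP := Sub (mkv 0 1 1) posc_subproof.

Definition sigma (p : {perm CP}) : {perm EP} :=
  if odd_perm p then tperm pos_b pos_c else 1%g.

Definition Sset : {set {perm EP} * {perm CP}} := [set (sigma p, p) | p : {perm CP}].

From Stdlib Require Import ZArith.
From mathcomp Require Import all_boot all_fingroup.
Set Implicit Arguments. Unset Strict Implicit. Unset Printing Implicit Defensive.

(* Every face turn permutes the corner stickers oddly (three 4-cycles) and the corner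
   positions oddly (one 4-cycle), so on G3 the corner-sticker and corner-position permutations
   have the same parity. Let H be the set of g in G3 that fix every edge sticker when psi g is
   even, and act on edges by a fixed swap of the edge cubelets b and c when psi g is odd.
   Then g in H is determined by psi g, and each face turn of G2 lifts to an explicit word in H,
   so psi maps H isomorphically onto G2. The kernel of the corner-position map on H is L. The
   elements of H keeping every U/D sticker on the U/D faces form a complement Q_S of L: an
   element of both fixes every corner cubelet with its orientation, hence is trivial, while
   the transpositions (corner0 x) generating S8 lift to explicit words in Q_S. On Q_S the edge
   action is the swap (b c) exactly for odd corner permutations, so alpha(Q_S) = S. *)

Lemma mkpermE (T : finType) (f : T -> T) : injective f -> mkperm f =1 f.
Proof. by move=> f_inj x; rewrite /mkperm; case: injectiveP => [f_inj'|[]//]; rewrite permE. Qed.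

Lemma eq_mkperm (T : finType) (f g : T -> T) : f =1 g -> mkperm f = mkperm g.
Proof.
move=> eq_fg; rewrite /mkperm.
case: injectiveP => [f_inj|f_ninj]; case: injectiveP => [g_inj|g_ninj] //.
- by apply/permP => x; rewrite !permE.
- by case: g_ninj; apply: eq_inj f_inj eq_fg.
- by case: f_ninj; apply: eq_inj g_inj (fsym eq_fg).
Qed.

Lemma mkperm_perm (T : finType) (s : {perm T}) : mkperm s = s.
Proof. by apply/permP => x; rewrite mkpermE //; apply: perm_inj. Qed.

Definition swaps (T : eqType) (ts : seq (T * T)) (x : T) : T :=
  foldl (fun y t => [fun z => z with t.1 |-> t.2, t.2 |-> t.1] y) x ts.

Definition odd_swaps (T : eqType) (ts : seq (T * T)) : bool :=
  foldr (fun t b => (t.1 != t.2) (+) b) false ts.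

Lemma prod_tpermE (T : finType) (ts : seq (T * T)) :
  (\prod_(t <- ts) tperm t.1 t.2)%g =1 swaps ts.
Proof.
elim: ts => [|t ts IHts] x; first by rewrite big_nil perm1.
by rewrite big_cons permM IHts permE.
Qed.

Lemma odd_prod_tperm (T : finType) (ts : seq (T * T)) :
  odd_perm (\prod_(t <- ts) tperm t.1 t.2)%g = odd_swaps ts.
Proof.
elim: ts => [|t ts IHts]; first by rewrite big_nil odd_perm1.
by rewrite big_cons odd_permM odd_tperm IHts.
Qed.

(* [vm_compute] cannot evaluate [insub] (it goes through the opaque [idP]), hence the explicit
   enumerations below, built with the transparent [insub_eq]. *)
Lemma mem_pmap_insub_eq (T : eqType) (P : pred T) (sT : subEqType P) (s : seq T) (u : sT) :
  (u \in pmap (insub_eq sT) s) = (val u \in s).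
Proof. by rewrite (eq_pmap (@insub_eqE _ _ _)) mem_pmap_sub. Qed.

Definition ords3 : seq 'I_3 := [:: @Ordinal 3 0 isT; @Ordinal 3 1 isT; @Ordinal 3 2 isT].

Lemma mem_ords3 i : i \in ords3.
Proof. by rewrite -(mem_map val_inj) !inE; case: i => [[|[|[|]]]]. Qed.

Definition vecs : seq vec :=
  [seq (ab, c) | ab <- [seq (a, b) | a <- ords3, b <- ords3], c <- ords3].

Lemma mem_vecs v : v \in vecs.
Proof. by case: v => [[a b] c]; rewrite !allpairs_f ?mem_ords3. Qed.

Definition stickers k : seq (stk k) := pmap (insub_eq _) [seq (p, n) | p <- vecs, n <- vecs].

Lemma mem_stickers k (s : stk k) : s \in stickers k.
Proof. by case: s => [[p n] ?]; rewrite mem_pmap_insub_eq allpairs_f ?mem_vecs. Qed.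

Lemma all_stickersP k (P : pred (stk k)) : reflect (forall s, P s) (all P (stickers k)).
Proof.
by apply: (iffP allP) => [P_s s | P_s s _]; [apply: P_s; apply: mem_stickers | apply: P_s].
Qed.

Definition positions k : seq {p : vec | nzc p == k} := pmap (insub_eq _) vecs.

Lemma mem_positions k (p : {p : vec | nzc p == k}) : p \in positions k.
Proof. by rewrite mem_pmap_insub_eq mem_vecs. Qed.

Lemma all_positionsP k (P : pred {p : vec | nzc p == k}) :
  reflect (forall p, P p) (all P (positions k)).
Proof.
by apply: (iffP allP) => [P_p p | P_p p _]; [apply: P_p; apply: mem_positions | apply: P_p].
Qed.

Lemma cubelet_subproof k (s : stk k) : nzc (pos s) == k.
Proof. by case/and3P: (valP s). Qed.

Definition cubelet k (s : stk k) : {p : vec | nzc p == k} :=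
  exist _ (pos s) (cubelet_subproof s).

Definition turn k (m : vec) (s : stk k) : stk k :=
  if Z.eqb (dot (val s).1 m) 1
  then odflt s (insub_eq _ (rot90 m (val s).1, rot90 m (val s).2)) else s.

Lemma movefunE k m : @movefun k m =1 turn m.
Proof. by move=> s; rewrite /movefun /turn /insubd insub_eqE. Qed.

Definition turn3 (m : vec) (x : St3) : St3 :=
  match x with inl c => inl (turn m c) | inr e => inr (turn m e) end.

Definition faces : seq vec := [:: nU; nD; nF; nB; nL; nR].

Definition face (i : nat) : vec := nth nU faces i.

Lemma face_in_faces i : face i \in faces.
Proof.
by rewrite /face; case: (ltnP i 6) => [lt_i6|ge_i6]; [rewrite mem_nth | rewrite nth_default].
Qed.

Definition word_act (w : seq nat) (x : St3) : St3 := foldl (fun y i => turn3 (face i) y) x w.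

Definition corner0 : CP := exist _ (mkv 1 1 1) (erefl true).
Definition corner_sticker0 : CS := exist _ (mkv 1 1 1, mkv 1 0 0) (erefl true).
Definition edge_sticker0 : ES := exist _ (mkv 1 1 0, mkv 1 0 0) (erefl true).

Definition corner_rep (p : CP) : CS :=
  odflt corner_sticker0 (insub_eq _ (val p, mkv (vx (val p)) 0 0)).

Definition edge_rep (p : EP) : ES :=
  let n := if Z.eqb (vx (val p)) 0 then mkv 0 (vy (val p)) 0 else mkv (vx (val p)) 0 0 in
  odflt edge_sticker0 (insub_eq _ (val p, n)).

(* The mirror x <-> z exchanges the edge cubelets b and c and keeps their U stickers up. *)
Definition swap_xz (v : vec) : vec := (v.2, v.1.2, v.1.1).

Definition edge_swap (e : ES) : ES :=
  if (pos e == val pos_b) || (pos e == val pos_c)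
  then odflt e (insub_eq _ (swap_xz (val e).1, swap_xz (val e).2)) else e.

(* For a corner p and the normal n of one of its stickers, (p - n + p x n) / 2 is the normal
   of the next sticker of the same cubelet. *)
Definition cw_normal (p n : vec) : vec :=
  mkv ((vx p - vx n + (vy p * vz n - vz p * vy n)) / 2)
      ((vy p - vy n + (vz p * vx n - vx p * vz n)) / 2)
      ((vz p - vz n + (vx p * vy n - vy p * vx n)) / 2).

Definition cw (c : CS) : CS := odflt c (insub_eq _ (pos c, cw_normal (pos c) (val c).2)).

Definition upright (c : CS) : bool := ~~ Z.eqb (vy (val c).2) 0.

Lemma cubelet_corner_rep p : cubelet (corner_rep p) = p.
Proof. by apply/val_inj/eqP; move: p; apply/all_positionsP; vm_compute. Qed.

Lemma cubelet_edge_rep p : cubelet (edge_rep p) = p.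
Proof. by apply/val_inj/eqP; move: p; apply/all_positionsP; vm_compute. Qed.

Lemma cw3 c : cw (cw (cw c)) = c.
Proof. by apply/eqP; move: c; apply/all_stickersP; vm_compute. Qed.

Lemma upright_cw c : [|| upright c, upright (cw c) | upright (cw (cw c))].
Proof. by move: c; apply/all_stickersP; vm_compute. Qed.

Lemma upright_inj c c' : upright c -> upright c' -> pos c = pos c' -> c = c'.
Proof.
move=> up_c up_c' eq_pos; apply/eqP.
have /all_stickersP/(_ c)/all_stickersP/(_ c') :
    all (fun c => all (fun c' => [==> upright c, upright c', pos c == pos c' => c == c'])
                      (stickers 3)) (stickers 3) by vm_compute.
by rewrite up_c up_c' eq_pos eqxx.
Qed.

Lemma edge_swapK : involutive edge_swap.
Proof. by move=> e; apply/eqP; move: e; apply/all_stickersP; vm_compute. Qed.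

Lemma edge_swap_pos e e' : pos e = pos e' -> pos (edge_swap e) = pos (edge_swap e').
Proof.
move=> eq_pos; apply/eqP.
have /all_stickersP/(_ e)/all_stickersP/(_ e') :
    all (fun e => all (fun e' => (pos e == pos e') ==> (pos (edge_swap e) == pos (edge_swap e')))
                      (stickers 2)) (stickers 2) by vm_compute.
by rewrite eq_pos eqxx.
Qed.

Lemma cubelet_edge_swap p : cubelet (edge_swap (edge_rep p)) = tperm pos_b pos_c p.
Proof. by rewrite permE; apply/eqP; move: p; apply/all_positionsP; vm_compute. Qed.

Definition mkCP (x y z : Z) : CP := odflt corner0 (insub_eq _ (mkv x y z)).
Definition mkCS (x y z a b c : Z) : CS :=
  odflt corner_sticker0 (insub_eq _ (mkv x y z, mkv a b c)).

(* Certificates found by computer search; only their checked properties below are used. *)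
Definition U_sticker_swaps : seq (CS * CS) :=
  [:: (mkCS (-1) 1 (-1) (-1) 0 0, mkCS 1 1 (-1) 0 0 (-1));
     (mkCS (-1) 1 (-1) (-1) 0 0, mkCS 1 1 1 1 0 0);
     (mkCS (-1) 1 (-1) (-1) 0 0, mkCS (-1) 1 1 0 0 1);
     (mkCS (-1) 1 (-1) 0 0 (-1), mkCS 1 1 (-1) 1 0 0);
     (mkCS (-1) 1 (-1) 0 0 (-1), mkCS 1 1 1 0 0 1);
     (mkCS (-1) 1 (-1) 0 0 (-1), mkCS (-1) 1 1 (-1) 0 0);
     (mkCS (-1) 1 (-1) 0 1 0, mkCS 1 1 (-1) 0 1 0); (mkCS (-1) 1 (-1) 0 1 0, mkCS 1 1 1 0 1 0);
     (mkCS (-1) 1 (-1) 0 1 0, mkCS (-1) 1 1 0 1 0)].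
Definition U_position_swaps : seq (CP * CP) :=
  [:: (mkCP (-1) 1 (-1), mkCP 1 1 (-1)); (mkCP (-1) 1 (-1), mkCP 1 1 1);
     (mkCP (-1) 1 (-1), mkCP (-1) 1 1)].
Definition U_lift : seq nat :=
  [:: 3; 1; 5; 1; 1; 1; 2; 3; 3; 3; 4; 1; 1; 1; 4; 4; 4; 2; 2; 2; 0; 1; 1; 1; 5; 0; 0; 0; 5; 5; 5;
     0; 0; 0; 1; 3; 0; 3; 3; 3; 2; 1; 3; 5; 3; 3; 3; 1; 1; 1; 2; 2; 2; 0; 0; 0; 5; 5; 5; 0; 4; 3;
     3; 3; 0; 3; 5; 4; 4; 4; 1; 1; 1; 3; 3; 3; 1; 5; 5; 5; 2; 3; 3; 3; 5; 3; 2; 2; 2].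

Definition D_sticker_swaps : seq (CS * CS) :=
  [:: (mkCS (-1) (-1) (-1) (-1) 0 0, mkCS (-1) (-1) 1 0 0 1);
     (mkCS (-1) (-1) (-1) (-1) 0 0, mkCS 1 (-1) 1 1 0 0);
     (mkCS (-1) (-1) (-1) (-1) 0 0, mkCS 1 (-1) (-1) 0 0 (-1));
     (mkCS (-1) (-1) (-1) 0 (-1) 0, mkCS (-1) (-1) 1 0 (-1) 0);
     (mkCS (-1) (-1) (-1) 0 (-1) 0, mkCS 1 (-1) 1 0 (-1) 0);
     (mkCS (-1) (-1) (-1) 0 (-1) 0, mkCS 1 (-1) (-1) 0 (-1) 0);
     (mkCS (-1) (-1) (-1) 0 0 (-1), mkCS (-1) (-1) 1 (-1) 0 0);
     (mkCS (-1) (-1) (-1) 0 0 (-1), mkCS 1 (-1) 1 0 0 1);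
     (mkCS (-1) (-1) (-1) 0 0 (-1), mkCS 1 (-1) (-1) 1 0 0)].
Definition D_position_swaps : seq (CP * CP) :=
  [:: (mkCP (-1) (-1) (-1), mkCP (-1) (-1) 1); (mkCP (-1) (-1) (-1), mkCP 1 (-1) 1);
     (mkCP (-1) (-1) (-1), mkCP 1 (-1) (-1))].
Definition D_lift : seq nat :=
  [:: 1; 1; 1; 2; 1; 3; 2; 2; 2; 5; 5; 5; 2; 2; 2; 5; 4; 4; 4; 0; 0; 0; 4; 2; 3; 3; 3; 0; 0; 0; 5;
     5; 0; 1; 1; 1; 2; 1; 3; 2; 2; 2; 5; 5; 5; 2; 2; 2; 5; 4; 4; 4; 0; 0; 0; 4; 2; 3; 3; 3; 0; 1;
     1; 1; 5; 5; 5; 1; 5; 0; 0; 0; 1; 3; 3; 3; 1; 1; 1; 3; 0; 5; 5; 5; 3; 2; 2; 2; 0; 0; 2; 3; 3;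
     3; 5; 5; 5; 0; 0; 0; 5; 2; 1; 5; 1; 1; 1; 0; 2; 2; 2; 0; 0; 0; 2; 2; 2; 5; 5; 5; 1; 1; 1; 2;
     3; 3; 3; 1; 2; 2; 2; 3; 5; 5; 5; 1; 3; 5; 3; 3; 3; 2; 1; 1; 1; 2; 2; 2; 1].

Definition F_sticker_swaps : seq (CS * CS) :=
  [:: (mkCS (-1) (-1) 1 (-1) 0 0, mkCS (-1) 1 1 0 1 0);
     (mkCS (-1) (-1) 1 (-1) 0 0, mkCS 1 1 1 1 0 0);
     (mkCS (-1) (-1) 1 (-1) 0 0, mkCS 1 (-1) 1 0 (-1) 0);
     (mkCS (-1) (-1) 1 0 (-1) 0, mkCS (-1) 1 1 (-1) 0 0);
     (mkCS (-1) (-1) 1 0 (-1) 0, mkCS 1 1 1 0 1 0);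
     (mkCS (-1) (-1) 1 0 (-1) 0, mkCS 1 (-1) 1 1 0 0);
     (mkCS (-1) (-1) 1 0 0 1, mkCS (-1) 1 1 0 0 1); (mkCS (-1) (-1) 1 0 0 1, mkCS 1 1 1 0 0 1);
     (mkCS (-1) (-1) 1 0 0 1, mkCS 1 (-1) 1 0 0 1)].
Definition F_position_swaps : seq (CP * CP) :=
  [:: (mkCP (-1) (-1) 1, mkCP (-1) 1 1); (mkCP (-1) (-1) 1, mkCP 1 1 1);
     (mkCP (-1) (-1) 1, mkCP 1 (-1) 1)].
Definition F_lift : seq nat :=
  [:: 1; 1; 1; 2; 1; 3; 2; 2; 2; 5; 5; 5; 2; 2; 2; 5; 4; 4; 4; 0; 0; 0; 4; 2; 3; 3; 3; 0; 0; 0; 5;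
     0; 3; 3; 3; 0; 0; 0; 5; 5; 5; 0; 3; 2; 2; 2; 4; 4; 4; 0; 4; 0; 1; 1; 1; 2; 0; 0; 0; 1; 5; 5;
     5; 2; 1; 5; 1; 1; 1; 0; 2; 2; 2; 0; 0; 0; 2].

Definition B_sticker_swaps : seq (CS * CS) :=
  [:: (mkCS (-1) (-1) (-1) (-1) 0 0, mkCS 1 (-1) (-1) 0 (-1) 0);
     (mkCS (-1) (-1) (-1) (-1) 0 0, mkCS 1 1 (-1) 1 0 0);
     (mkCS (-1) (-1) (-1) (-1) 0 0, mkCS (-1) 1 (-1) 0 1 0);
     (mkCS (-1) (-1) (-1) 0 (-1) 0, mkCS 1 (-1) (-1) 1 0 0);
     (mkCS (-1) (-1) (-1) 0 (-1) 0, mkCS 1 1 (-1) 0 1 0);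
     (mkCS (-1) (-1) (-1) 0 (-1) 0, mkCS (-1) 1 (-1) (-1) 0 0);
     (mkCS (-1) (-1) (-1) 0 0 (-1), mkCS 1 (-1) (-1) 0 0 (-1));
     (mkCS (-1) (-1) (-1) 0 0 (-1), mkCS 1 1 (-1) 0 0 (-1));
     (mkCS (-1) (-1) (-1) 0 0 (-1), mkCS (-1) 1 (-1) 0 0 (-1))].
Definition B_position_swaps : seq (CP * CP) :=
  [:: (mkCP (-1) (-1) (-1), mkCP 1 (-1) (-1)); (mkCP (-1) (-1) (-1), mkCP 1 1 (-1));
     (mkCP (-1) (-1) (-1), mkCP (-1) 1 (-1))].
Definition B_lift : seq nat :=
  [:: 3; 1; 5; 1; 1; 1; 2; 3; 3; 3; 4; 1; 1; 1; 4; 4; 4; 1; 3; 5; 5; 5; 3; 3; 3; 1; 1; 1; 2; 2; 2;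
     0; 0; 0; 5; 0; 0; 5; 5; 5; 3; 4; 2; 4; 4; 4; 0; 3; 3; 3; 2; 5; 5; 5; 0; 2; 2; 2; 0; 0; 0; 2;
     2; 2; 5; 0; 0; 5; 5; 5; 3; 2; 2; 2; 0; 2; 3; 3; 3; 0; 3; 1; 4; 0; 4; 4; 4; 1; 1; 1; 3; 3; 3;
     1; 1; 1; 5; 5; 5; 1; 0; 5; 1; 0; 0; 0; 3; 3; 3; 1; 1; 1; 3].

Definition L_sticker_swaps : seq (CS * CS) :=
  [:: (mkCS (-1) (-1) (-1) (-1) 0 0, mkCS (-1) 1 (-1) (-1) 0 0);
     (mkCS (-1) (-1) (-1) (-1) 0 0, mkCS (-1) 1 1 (-1) 0 0);
     (mkCS (-1) (-1) (-1) (-1) 0 0, mkCS (-1) (-1) 1 (-1) 0 0);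
     (mkCS (-1) (-1) (-1) 0 (-1) 0, mkCS (-1) 1 (-1) 0 0 (-1));
     (mkCS (-1) (-1) (-1) 0 (-1) 0, mkCS (-1) 1 1 0 1 0);
     (mkCS (-1) (-1) (-1) 0 (-1) 0, mkCS (-1) (-1) 1 0 0 1);
     (mkCS (-1) (-1) (-1) 0 0 (-1), mkCS (-1) 1 (-1) 0 1 0);
     (mkCS (-1) (-1) (-1) 0 0 (-1), mkCS (-1) 1 1 0 0 1);
     (mkCS (-1) (-1) (-1) 0 0 (-1), mkCS (-1) (-1) 1 0 (-1) 0)].
Definition L_position_swaps : seq (CP * CP) :=
  [:: (mkCP (-1) (-1) (-1), mkCP (-1) 1 (-1)); (mkCP (-1) (-1) (-1), mkCP (-1) 1 1);
     (mkCP (-1) (-1) (-1), mkCP (-1) (-1) 1)].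
Definition L_lift : seq nat :=
  [:: 1; 1; 1; 2; 1; 3; 2; 2; 2; 5; 5; 5; 2; 2; 2; 5; 4; 4; 4; 0; 0; 0; 4; 2; 3; 3; 3; 0; 0; 0; 5;
     0; 3; 1; 5; 1; 1; 1; 2; 3; 3; 3; 4; 1; 1; 1; 4; 4; 4; 2; 2; 2; 0; 0; 0; 3; 3; 3; 5; 3; 0; 2;
     1; 5; 5; 5; 1; 1; 1; 2; 2; 2; 1; 1; 1; 4; 4; 4; 0; 0; 0; 2; 2; 2; 0; 4; 1; 5; 2; 2; 4; 1; 1;
     1; 4; 4; 4; 2; 2; 2; 5; 5; 5; 2; 2; 2; 5; 2; 4; 4; 1; 1; 1; 4; 4; 4; 5; 2; 5; 5; 5; 4; 4; 4;
     2; 4; 5; 5; 5; 1; 1; 4; 4; 4; 5; 2; 0; 1; 1; 1; 0; 5; 0; 0; 0; 1; 3; 3; 3; 0; 0; 0; 4; 4; 4;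
     0; 1; 1; 1; 3; 0; 0; 0; 1; 4].

Definition R_sticker_swaps : seq (CS * CS) :=
  [:: (mkCS 1 (-1) (-1) 0 (-1) 0, mkCS 1 (-1) 1 0 0 1);
     (mkCS 1 (-1) (-1) 0 (-1) 0, mkCS 1 1 1 0 1 0);
     (mkCS 1 (-1) (-1) 0 (-1) 0, mkCS 1 1 (-1) 0 0 (-1));
     (mkCS 1 (-1) (-1) 0 0 (-1), mkCS 1 (-1) 1 0 (-1) 0);
     (mkCS 1 (-1) (-1) 0 0 (-1), mkCS 1 1 1 0 0 1);
     (mkCS 1 (-1) (-1) 0 0 (-1), mkCS 1 1 (-1) 0 1 0);
     (mkCS 1 (-1) (-1) 1 0 0, mkCS 1 (-1) 1 1 0 0); (mkCS 1 (-1) (-1) 1 0 0, mkCS 1 1 1 1 0 0);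
     (mkCS 1 (-1) (-1) 1 0 0, mkCS 1 1 (-1) 1 0 0)].
Definition R_position_swaps : seq (CP * CP) :=
  [:: (mkCP 1 (-1) (-1), mkCP 1 (-1) 1); (mkCP 1 (-1) (-1), mkCP 1 1 1);
     (mkCP 1 (-1) (-1), mkCP 1 1 (-1))].
Definition R_lift : seq nat :=
  [:: 3; 2; 2; 2; 4; 4; 4; 0; 0; 0; 4; 3; 3; 3; 2; 0; 0; 0; 5; 3; 3; 3; 5; 3; 0; 2; 1; 5; 5; 5; 1;
     1; 1; 2; 2; 2; 0; 5; 5; 5; 3; 2; 2; 2; 0; 0; 2; 3; 3; 3; 5; 5; 5; 0; 0; 0; 5].
Definition face_data : seq (vec * seq (CS * CS) * seq (CP * CP) * seq nat) :=
  [:: (nU, U_sticker_swaps, U_position_swaps, U_lift);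
      (nD, D_sticker_swaps, D_position_swaps, D_lift);
      (nF, F_sticker_swaps, F_position_swaps, F_lift);
      (nB, B_sticker_swaps, B_position_swaps, B_lift);
      (nL, L_sticker_swaps, L_position_swaps, L_lift);
      (nR, R_sticker_swaps, R_position_swaps, R_lift)].

Definition face_certified (d : vec * seq (CS * CS) * seq (CP * CP) * seq nat) : bool :=
  let: (m, ts, ps, w) := d in
  [&& all (fun c => iter 4 (turn m) c == c) (stickers 3),
      all (fun e => iter 4 (turn m) e == e) (stickers 2),
      all (fun c => all (fun c' => (pos (turn m c) == pos (turn m c')) == (pos c == pos c'))
                        (stickers 3)) (stickers 3),
      all (fun c => turn m (cw c) == cw (turn m c)) (stickers 3),
      all (fun c => turn m c == swaps ts c) (stickers 3),
      all (fun c => swaps ps (cubelet c) == cubelet (turn m c)) (stickers 3),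
      odd_swaps ts && odd_swaps ps,
      all (fun c => word_act w (inl c) == inl (turn m c)) (stickers 3) &
      all (fun e => word_act w (inr e) == inr (edge_swap e)) (stickers 2)].

Lemma face_data_certified : all face_certified face_data.
Proof. by vm_compute. Qed.

Lemma face_certificate m : m \in faces -> exists ts ps w, face_certified (m, ts, ps, w).
Proof.
have -> : faces = [seq d.1.1.1 | d <- face_data] by [].
case/mapP => -[[[m' ts] ps] w] d_in ->; exists ts, ps, w.
exact: allP face_data_certified _ d_in.
Qed.

Definition tperm_lift0 : seq nat :=
  [:: 1; 1; 1; 2; 1; 3; 2; 2; 2; 5; 5; 5; 2; 2; 2; 5; 4; 4; 4; 0; 0; 0; 4; 2; 3; 3; 3; 0; 0; 0; 5;
     0; 0; 1; 1; 1; 5; 5; 5; 1; 5; 0; 0; 0; 1; 3; 3; 3; 1; 1; 1; 3; 0; 5; 5; 5; 3; 4; 2; 4; 4; 4;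
     0; 3; 3; 3; 2; 5; 5; 5; 0; 2; 2; 2; 0; 0; 0; 2; 2; 2; 5; 0; 0; 3; 3; 3; 2; 5; 5; 2; 2; 2; 3;
     0; 0; 0; 2; 2; 2; 0; 1; 1; 1; 2; 0; 0; 0; 1; 5; 5; 5; 2; 3; 1; 0; 0; 0; 3; 0; 1; 1; 1; 5; 5;
     5; 3; 3; 3; 5; 4; 4; 4; 0; 0; 0; 3; 5; 5; 5; 4; 0; 0; 0; 2; 2; 4; 4; 4; 2; 2; 2; 4; 5; 5; 5;
     1; 5; 3; 4; 5; 3; 3; 3; 0; 0; 0; 2; 1; 1; 1; 2; 5; 5; 5; 2; 5; 3; 3; 3; 1; 1; 1; 3; 5; 0; 2;
     0; 0; 0; 2; 4; 3; 4; 4; 4; 1; 1; 1; 5; 5; 5; 2; 1; 2; 2].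
Definition tperm_lift1 : seq nat :=
  [:: 3; 3; 3; 1; 1; 1; 5; 5; 5; 1; 5; 3; 2; 5; 1; 5; 5; 5; 1; 1; 1; 2; 2; 2; 3; 0; 0; 0; 3; 3; 3;
     2; 5; 5; 2; 2; 2; 3; 0; 0; 0; 3; 3; 3; 0; 0; 0; 5; 5; 5; 3; 2; 2; 2; 0; 2; 3; 3; 3; 0; 4; 4;
     4; 0; 0; 0; 5; 0; 0; 0; 5; 5; 5; 4; 2; 5; 5; 5; 2; 5; 5; 2; 4; 1; 1; 1; 4; 4; 4; 2; 2; 2; 5;
     5; 5; 2; 2; 2; 5; 2; 4; 0; 0; 0; 1; 5; 5; 5; 1; 1; 1; 0; 2; 4; 4; 4; 2; 4; 4; 4; 3; 5; 5; 5;
     4; 0; 0; 0; 5; 2; 2; 2; 5; 3; 4; 5; 5; 5; 2; 2; 2; 4; 4; 4; 3; 3; 3; 1; 3; 3; 3; 1; 1; 1; 3;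
     2; 5; 5; 5; 2; 2; 2; 5; 2; 0; 2; 0; 0; 0; 5; 5; 5; 2; 2; 2; 5; 0; 2; 2; 2; 0; 0; 0; 2; 0; 0;
     0; 5; 5; 5; 0; 1; 1; 1; 2; 4; 4; 4; 0; 4; 1; 2; 2].
Definition tperm_lift2 : seq nat :=
  [:: 3; 1; 5; 1; 1; 1; 2; 3; 3; 3; 4; 1; 1; 1; 4; 4; 4; 2; 2; 2; 3; 3; 3; 1; 1; 1; 5; 5; 5; 1; 5;
     3; 2; 5; 1; 5; 5; 5; 1; 1; 1; 2; 2; 2; 3; 1; 5; 3; 5; 5; 5; 4; 0; 0; 0; 4; 4; 4; 1; 1; 1; 3;
     3; 2; 2; 2; 0; 1; 1; 1; 2; 0; 0; 0; 1; 5; 5; 5; 2; 3; 1; 1; 1; 2; 3; 3; 3; 1; 2; 2; 2; 3; 5;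
     5; 5; 1; 0; 3; 3; 3; 5; 5; 5; 3; 2; 2; 2; 0; 2; 0; 0; 0; 4; 4; 4; 0; 0; 0; 3; 5; 5; 5; 4; 0;
     0; 0; 2; 5; 4; 4; 4; 1; 1; 1; 5; 5; 5; 4; 3; 5; 2; 4; 4; 4; 2; 1; 4; 3; 3; 3; 1; 1; 3; 5; 3;
     3; 3; 2; 2; 2; 5; 0; 2; 2; 2; 0; 0; 0; 4; 4; 4; 0; 0; 0; 4; 2; 3; 3; 3; 5; 3; 0; 0; 0; 2; 5;
     2; 2; 2; 3; 0; 0; 0; 4; 3; 3; 3; 0; 0; 0; 2; 2; 2; 0; 0].
Definition tperm_lift3 : seq nat :=
  [:: 2; 1; 3; 5; 5; 5; 3; 3; 3; 1; 1; 1; 2; 2; 2; 0; 0; 0; 5; 0; 0; 5; 5; 5; 3; 2; 2; 2; 0; 0; 2;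
     3; 3; 3; 5; 5; 5; 0; 0; 0; 3; 1; 5; 3; 5; 5; 5; 4; 0; 0; 0; 4; 4; 4; 1; 1; 1; 3; 3; 3; 1; 0;
     0; 0; 3; 3; 3; 1; 3; 0; 1; 1; 1; 5; 5; 5; 1; 1; 1; 5; 5; 1; 3; 5; 5; 5; 3; 3; 3; 2; 1; 2; 2;
     2; 1; 1; 1; 5; 5; 5; 4; 2; 2; 2; 4; 4; 4; 5; 0; 5; 5; 5; 1; 0; 0; 0; 5; 5; 5; 0; 1; 1; 1; 2;
     2; 0; 0; 0; 2; 1; 1; 1; 0; 4; 4; 4; 1; 2; 2; 2; 3; 1; 2; 3; 3; 3; 4; 4; 4; 2; 2; 2; 3; 3; 3;
     5; 2; 0; 0; 0; 3; 0; 0; 0; 5; 5; 5; 2; 1; 1; 1; 2; 5; 2; 2; 2; 0; 5; 2; 5; 5; 5; 2; 2; 2; 0;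
     0; 0; 5; 5; 5; 3; 3; 3; 5; 3; 0; 0; 0].
Definition tperm_lift4 : seq nat :=
  [:: 1; 1; 1; 2; 1; 3; 2; 2; 2; 5; 5; 5; 2; 2; 2; 5; 4; 4; 4; 0; 0; 0; 4; 2; 3; 3; 3; 0; 0; 0; 5;
     5; 0; 1; 1; 1; 2; 1; 3; 2; 2; 2; 5; 5; 5; 2; 2; 2; 5; 4; 4; 4; 0; 0; 0; 4; 2; 3; 3; 1; 1; 1;
     5; 5; 5; 1; 5; 3; 2; 5; 1; 5; 5; 5; 1; 1; 1; 2; 2; 2; 0; 1; 1; 1; 2; 2; 2; 0; 0; 0; 2; 1; 0;
     0; 0; 5; 5; 5; 0; 5; 4; 3; 3; 3; 0; 3; 5; 4; 4; 4; 1; 1; 1; 3; 3; 3; 1; 5; 5; 5; 3; 2; 2; 2;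
     1; 5; 1; 1; 1; 3; 3; 3; 2; 4; 1; 1; 1; 4; 4; 4; 3; 3; 3; 5; 1; 0; 0; 0; 3; 3; 3; 0; 1; 1; 1;
     3; 3; 0; 3; 3; 3; 2; 5; 5; 5; 2; 2; 2; 1; 0; 0; 0; 5; 5; 5; 0; 1; 1; 1; 2; 2; 0; 0; 0; 2; 1;
     1; 1; 0; 4; 4; 4; 1; 2; 2; 2; 3; 1; 2; 3; 3; 3; 4; 4; 4; 2; 2; 2; 3; 3; 3; 5; 2; 0; 0; 0; 3;
     0; 0; 0; 5; 5; 5; 2; 1; 1; 1; 2; 5; 0; 2; 0; 0; 0; 5; 5; 5; 2; 2; 2; 5; 5; 5].
Definition tperm_lift5 : seq nat :=
  [:: 1; 1; 1; 2; 1; 3; 2; 2; 2; 5; 5; 5; 2; 2; 2; 5; 4; 4; 4; 0; 0; 0; 4; 2; 3; 3; 3; 0; 0; 0; 5;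
     0; 3; 1; 5; 1; 1; 1; 2; 3; 3; 3; 4; 1; 1; 1; 4; 4; 4; 1; 3; 5; 5; 5; 3; 3; 3; 1; 1; 1; 2; 2;
     2; 0; 0; 0; 5; 0; 0; 5; 5; 5; 3; 4; 2; 4; 4; 4; 0; 3; 3; 3; 2; 5; 5; 5; 0; 2; 2; 2; 0; 0; 0;
     2; 2; 2; 5; 0; 0; 0; 4; 3; 3; 3; 0; 3; 5; 4; 4; 4; 1; 1; 1; 3; 3; 3; 1; 5; 5; 5; 2; 2; 2; 0;
     0; 0; 5; 0; 1; 1; 1; 2; 2; 2; 1; 2; 3; 3; 3; 5; 1; 0; 0; 0; 3; 3; 3; 0; 1; 1; 1; 3; 3; 0; 3;
     3; 3; 2; 5; 5; 5; 2; 2; 2; 1; 0; 0; 0; 5; 5; 5; 0; 1; 1; 1; 2; 2; 0; 0; 0; 2; 1; 1; 1; 0; 4;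
     4; 4; 1; 2; 2; 2; 3; 1; 2; 3; 3; 3; 4; 4; 4; 2; 2; 2; 3; 3; 3; 5; 2; 0; 0; 0; 3; 0; 0; 0; 5;
     5; 5; 2; 1; 1; 1; 2; 5; 2; 2; 2; 0; 2; 2; 2; 0; 0; 0; 4; 4; 4; 0; 0; 0; 4; 2].
Definition tperm_lift6 : seq nat :=
  [:: 1; 1; 1; 2; 1; 3; 2; 2; 2; 5; 5; 5; 2; 2; 2; 5; 4; 4; 4; 0; 0; 0; 4; 2; 3; 3; 3; 0; 0; 0; 5;
     0; 1; 3; 0; 0; 0; 3; 3; 3; 1; 1; 1; 0; 5; 0; 5; 5; 5; 1; 1; 1; 2; 2; 2; 0; 0; 0; 2; 1; 0; 0;
     0; 5; 5; 5; 0; 5; 4; 4; 4; 1; 1; 1; 2; 2; 2; 1; 4; 5; 5; 5; 3; 3; 3; 1; 3; 5; 5; 2; 4; 1; 1;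
     1; 4; 4; 4; 2; 2; 2; 5; 5; 5; 2; 2; 2; 5; 2; 4; 0; 0; 0; 1; 5; 5; 5; 1; 1; 1; 0; 2; 4; 4; 4;
     5; 3; 4; 5; 5; 5; 2; 2; 2; 4; 4; 4; 3; 3; 3; 1; 3; 3; 3; 1; 1; 1; 3; 2; 5; 5; 5; 2; 2; 2; 5].

Definition tperm_lifts : seq (CP * seq nat) :=
  [:: (mkCP (-1) (-1) (-1), tperm_lift0); (mkCP (-1) (-1) 1, tperm_lift1);
      (mkCP (-1) 1 (-1), tperm_lift2); (mkCP (-1) 1 1, tperm_lift3);
      (mkCP 1 (-1) (-1), tperm_lift4); (mkCP 1 (-1) 1, tperm_lift5);
      (mkCP 1 1 (-1), tperm_lift6)].

Definition tperm_lift_certified (d : CP * seq nat) : bool :=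
  let: (x, w) := d in
  [&& x != corner0,
      all (fun c => if word_act w (inl c) is inl c' then
                      (upright c ==> upright c') &&
                      (cubelet c' == swaps [:: (corner0, x)] (cubelet c))
                    else false) (stickers 3) &
      all (fun e => word_act w (inr e) == inr (edge_swap e)) (stickers 2)].

Lemma tperm_lifts_certified : all tperm_lift_certified tperm_lifts.
Proof. by vm_compute. Qed.

Lemma tperm_lifts_cover x : (x == corner0) || (x \in [seq d.1 | d <- tperm_lifts]).
Proof. by move: x; apply/all_positionsP; vm_compute. Qed.

Local Open Scope group_scope.

Lemma sdprod_ker_complement (gT rT : finGroupType) (D H Q : {group gT})
    (f : {morphism D >-> rT}) :
  H \subset D -> Q \subset H -> 'ker_H f :&: Q = 1 -> f @* Q = f @* H ->
  'ker_H f ><| Q = H.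
Proof.
move=> sHD sQH tiKQ fQH.
have nKQ : Q \subset 'N('ker_H f).
  exact: subset_trans sQH (normal_norm (normalGI sHD (ker_normal f))).
rewrite sdprodE //; apply/eqP; rewrite eqEsubset mul_subG ?subsetIl //=.
rewrite group_modr // subsetI subxx /= -morphimK ?(subset_trans sQH) // fQH.
by rewrite -sub_morphim_pre.
Qed.

Definition corner_part (g : {perm St3}) (c : CS) : CS := if g (inl c) is inl c' then c' else c.

Definition CornerStab : {set {perm St3}} :=
  [set g : {perm St3} | [forall c, g (inl c) == inl (corner_part g c)]].

Lemma CornerStabP (g : {perm St3}) :
  reflect (forall c, g (inl c) = inl (corner_part g c)) (g \in CornerStab).
Proof. by rewrite inE; apply: (iffP forallP) => g_inl c; apply/eqP. Qed.

Lemma group_set_CornerStab : group_set CornerStab.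
Proof.
apply/group_setP; split; first by apply/CornerStabP => c; rewrite /corner_part perm1.
move=> g h /CornerStabP g_inl /CornerStabP h_inl; apply/CornerStabP => c.
by rewrite /corner_part !permM g_inl h_inl.
Qed.
Canonical CornerStab_group := Group group_set_CornerStab.

Lemma psiE (g : {perm St3}) : g \in CornerStab -> psi g =1 corner_part g.
Proof.
move/CornerStabP=> g_inl; apply: mkpermE => c c' eq_cc'.
apply: (@inl_inj CS ES); apply: (@perm_inj _ g).
by rewrite !g_inl; congr inl; exact: eq_cc'.
Qed.

Lemma CornerStabE (g : {perm St3}) c : g \in CornerStab -> g (inl c) = inl (psi g c).
Proof. by move=> gS; rewrite psiE //; apply/CornerStabP. Qed.

Lemma psiM : {in CornerStab &, {morph psi : g h / g * h}}.
Proof.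
move=> g h gS hS; apply/permP => c; apply: (@inl_inj CS ES).
by rewrite permM -!CornerStabE ?groupM // permM.
Qed.
Canonical psi_morphism := Morphism psiM.

Lemma psi1 : psi 1 = 1.
Proof. exact: morph1 psi_morphism. Qed.

Definition induced k (f : stk k -> stk k) (p : {p : vec | nzc p == k}) :
    {p : vec | nzc p == k} :=
  odflt p [pick q | [exists s, (pos s == val p) && (pos (f s) == val q)]].

Lemma inducedE k (f : stk k -> stk k) s :
  {homo f : s s' / pos s = pos s'} -> induced f (cubelet s) = cubelet (f s).
Proof.
move=> f_pos; rewrite /induced; case: pickP => [q|none] /=.
  case/existsP=> s' /andP[/eqP pos_s' /eqP pos_q].
  by apply: val_inj; rewrite /= -pos_q; apply: f_pos.
by have /existsP[] := negbT (none (cubelet (f s))); exists s; rewrite !eqxx.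
Qed.

Lemma phiE (h : {perm CS}) : phi h = mkperm (induced h).
Proof. by []. Qed.

Lemma beta_induced (g : {perm St3}) (f : ES -> ES) :
  (forall e, g (inr e) = inr (f e)) -> beta g = mkperm (induced f).
Proof.
move=> g_inr; apply: eq_mkperm => p; rewrite /induced; congr (odflt p _).
by apply: eq_pick => q; apply: eq_existsb => e; rewrite g_inr.
Qed.

Definition cubelet_preserving (h : {perm CS}) : bool :=
  [forall c, forall c', (pos (h c) == pos (h c')) == (pos c == pos c')].

Lemma cubelet_preservingP (h : {perm CS}) :
  reflect {mono h : c c' / pos c == pos c'} (cubelet_preserving h).
Proof.
apply: (iffP forallP) => [h_mono c c' | h_mono c]; last by apply/forallP => c'; rewrite h_mono.
by have /forallP/(_ c')/eqP := h_mono c.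
Qed.

Lemma phi_cubelet (h : {perm CS}) c :
  cubelet_preserving h -> phi h (cubelet c) = cubelet (h c).
Proof.
move/cubelet_preservingP => h_mono.
have h_pos : {homo h : c c' / pos c = pos c'} by move=> c1 c2 /eqP; rewrite -h_mono => /eqP.
rewrite phiE mkpermE ?inducedE // => p p'.
rewrite -(cubelet_corner_rep p) -(cubelet_corner_rep p') !inducedE // => /(congr1 val) /eqP.
by rewrite h_mono => /eqP eq_pos; apply: val_inj.
Qed.

Lemma cubelet_preservingM (h h' : {perm CS}) :
  cubelet_preserving h -> cubelet_preserving h' -> cubelet_preserving (h * h').
Proof.
move=> /cubelet_preservingP h_mono /cubelet_preservingP h'_mono.
by apply/cubelet_preservingP => c c'; rewrite !permM h'_mono h_mono.
Qed.

Lemma phiM (h h' : {perm CS}) :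
  cubelet_preserving h -> cubelet_preserving h' -> phi (h * h') = phi h * phi h'.
Proof.
move=> hP h'P; apply/permP => p; rewrite -(cubelet_corner_rep p).
rewrite phi_cubelet ?cubelet_preservingM // !permM.
by rewrite -(phi_cubelet (h _) h'P) -(phi_cubelet _ hP).
Qed.

Lemma phi1 : phi 1 = 1.
Proof.
have oneP : cubelet_preserving 1 by apply/cubelet_preservingP => c c'; rewrite !perm1.
by apply/permP => p; rewrite -(cubelet_corner_rep p) phi_cubelet // !perm1.
Qed.

Definition cw_commuting (h : {perm CS}) : bool := [forall c, h (cw c) == cw (h c)].

Definition Rigid2 : {set {perm CS}} :=
  [set h | [&& cubelet_preserving h, cw_commuting h & odd_perm h == odd_perm (phi h)]].

Lemma group_set_Rigid2 : group_set Rigid2.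
Proof.
apply/group_setP; split.
  rewrite inE phi1 !odd_perm1 eqxx andbT; apply/andP; split.
    by apply/cubelet_preservingP => c c'; rewrite !perm1.
  by apply/forallP => c; rewrite !perm1.
move=> h h'; rewrite !inE => /and3P[hP /forallP h_cw /eqP h_odd].
case/and3P=> h'P /forallP h'_cw /eqP h'_odd.
rewrite cubelet_preservingM // phiM // !odd_permM h_odd h'_odd eqxx andbT /=.
by apply/forallP => c; rewrite !permM (eqP (h_cw c)) (eqP (h'_cw _)).
Qed.
Canonical Rigid2_group := Group group_set_Rigid2.

Lemma phiM_Rigid2 : {in Rigid2 &, {morph phi : h h' / h * h'}}.
Proof. by move=> h h'; rewrite !inE => /and3P[hP _ _] /and3P[h'P _ _]; apply: phiM. Qed.

Lemma cw_inj : injective cw.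
Proof. exact: can_inj (fun c => cw (cw c)) cw3. Qed.

Lemma Rigid2_trivial (h : {perm CS}) :
  h \in Rigid2 -> phi h = 1 -> {homo h : c / upright c} -> h = 1.
Proof.
rewrite inE => /and3P[hP /forallP h_cw _] phi_h1 h_up.
have h_pos c : pos (h c) = pos c.
  by have := phi_cubelet c hP; rewrite phi_h1 perm1 => /(congr1 val).
have h_fix c : upright c -> h c = c.
  by move=> up_c; apply: upright_inj (h_up c up_c) up_c (h_pos c).
have cwE c : h (cw c) = cw (h c) by apply/eqP.
apply/permP => c; rewrite perm1.
case/or3P: (upright_cw c) => [/h_fix // | /h_fix up_cw | /h_fix up_cw2].
  by apply: cw_inj; rewrite -cwE.
by apply: cw_inj; apply: cw_inj; rewrite -!cwE.
Qed.

Lemma faces_gens (T : finType) (mv : vec -> T) x :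
  (x \in [set mv nU; mv nD; mv nF; mv nB; mv nL; mv nR]) = (x \in map mv faces).
Proof. by rewrite !inE /= !orbA. Qed.

Lemma move3E m : m \in faces -> move3 m =1 turn3 m.
Proof.
case/face_certificate=> ts [ps [w /and5P[/all_stickersP turn4_c /all_stickersP turn4_e _ _ _]]].
have turn3_inj : injective (turn3 m).
  apply: (can_inj (g := iter 3 (turn3 m))) => -[c|e] /=; congr (_ _); apply/eqP.
    exact: turn4_c.
  exact: turn4_e.
move=> x; rewrite /move3 -(mkpermE turn3_inj x); congr (fun_of_perm _ x).
by apply: eq_mkperm => -[c|e]; rewrite /= movefunE.
Qed.

Lemma move2E m : m \in faces -> move2 m =1 turn m.
Proof.
case/face_certificate=> ts [ps [w /and5P[/all_stickersP turn4_c _ _ _ _]]].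
have turn_inj : injective (@turn 3 m).
  by apply: (can_inj (g := iter 3 (turn m))) => c; apply/eqP; apply: turn4_c.
by move=> c; rewrite /move2 (eq_mkperm (@movefunE 3 m)) mkpermE.
Qed.

Lemma odd_move2 m : m \in faces -> odd_perm (move2 m).
Proof.
move=> m_face; have move2_turn := move2E m_face.
case/face_certificate: m_face => ts [ps [w /and5P[_ _ _ _]]].
case/and5P=> /all_stickersP ts_ok _ /andP[ts_odd _] _ _.
rewrite (_ : move2 m = \prod_(t <- ts) tperm t.1 t.2) ?odd_prod_tperm //.
by apply/permP => c; rewrite move2_turn prod_tpermE; apply/eqP/ts_ok.
Qed.

Lemma move2_Rigid2 m : m \in faces -> move2 m \in Rigid2.
Proof.
move=> m_face; have odd_m := odd_move2 m_face; have move2_turn := move2E m_face.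
case/face_certificate: m_face => ts [ps [w /and5P[_ _ /all_stickersP mono /all_stickersP comm]]].
case/and5P=> _ /all_stickersP ps_ok /andP[_ ps_odd] _ _.
have m_cub : cubelet_preserving (move2 m).
  apply/cubelet_preservingP => c c'; rewrite !move2_turn.
  by have /all_stickersP/(_ c')/eqP := mono c.
have phi_m : phi (move2 m) = \prod_(t <- ps) tperm t.1 t.2.
  apply/permP => p; rewrite -(cubelet_corner_rep p) phi_cubelet // prod_tpermE move2_turn.
  by apply/esym/eqP/ps_ok.
rewrite inE m_cub phi_m odd_prod_tperm odd_m ps_odd andbT /=.
by apply/forallP => c; rewrite !move2_turn; apply: comm.
Qed.

Lemma G2_sub_Rigid2 : G2 \subset Rigid2.
Proof.
rewrite gen_subG; apply/subsetP => h; rewrite faces_gens => /mapP[m m_face ->].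
exact: move2_Rigid2.
Qed.

Lemma move3_CornerStab m : m \in faces -> move3 m \in CornerStab.
Proof. by move=> m_face; apply/CornerStabP => c; rewrite /corner_part !move3E. Qed.

Lemma psi_move3 m : m \in faces -> psi (move3 m) = move2 m.
Proof.
move=> m_face; apply/permP => c.
by rewrite psiE ?move3_CornerStab // /corner_part move3E // move2E.
Qed.

Lemma G3_sub_CornerStab : G3 \subset CornerStab.
Proof.
rewrite gen_subG; apply/subsetP => g; rewrite faces_gens => /mapP[m m_face ->].
exact: move3_CornerStab.
Qed.

Lemma psi_G3 : psi @* G3 = G2.
Proof.
have gens_sub : [set u3; d3; f3; b3; l3; r3] \subset CornerStab.
  exact: subset_trans (subset_gen _) G3_sub_CornerStab.
rewrite /G3 morphim_gen // morphimEsub //; congr <<_>>.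
apply/setP => h; rewrite faces_gens; apply/imsetP/mapP => [[g] | [m m_face ->]] /=.
  by rewrite faces_gens => /mapP[m m_face ->] ->; exists m; rewrite ?psi_move3.
by exists (move3 m); rewrite ?faces_gens ?map_f ?psi_move3.
Qed.

Lemma psi_G3_Rigid2 g : g \in G3 -> psi g \in Rigid2.
Proof.
move=> gG3; apply: (subsetP G2_sub_Rigid2); rewrite -psi_G3.
exact: mem_morphim (subsetP G3_sub_CornerStab g gG3) gG3.
Qed.

Lemma cubelet_preserving_psi g : g \in G3 -> cubelet_preserving (psi g).
Proof. by move/psi_G3_Rigid2; rewrite inE => /and3P[]. Qed.

Definition corner_perm (g : {perm St3}) : {perm CP} := phi (psi g).

Lemma corner_permM : {in G3 &, {morph corner_perm : g h / g * h}}.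
Proof.
move=> g h gG3 hG3; rewrite /corner_perm psiM ?(subsetP G3_sub_CornerStab) //.
by rewrite phiM_Rigid2 ?psi_G3_Rigid2.
Qed.
Canonical corner_perm_morphism := Morphism corner_permM.

Lemma odd_psi g : g \in G3 -> odd_perm (psi g) = odd_perm (corner_perm g).
Proof. by move/psi_G3_Rigid2; rewrite inE => /and3P[_ _ /eqP]. Qed.

Lemma corner_perm1P g :
  g \in G3 -> reflect (forall c, pos (psi g c) = pos c) (corner_perm g == 1).
Proof.
move/cubelet_preserving_psi => gP; apply: (iffP eqP) => [g1 c | fix_pos].
  by have := phi_cubelet c gP; rewrite -/(corner_perm g) g1 perm1 => /(congr1 val).
apply/permP => p; rewrite perm1 -(cubelet_corner_rep p) /corner_perm phi_cubelet //.
by apply: val_inj; apply: fix_pos.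
Qed.

Definition word3 (w : seq nat) : {perm St3} := \prod_(i <- w) move3 (face i).

Lemma word3E w : word3 w =1 word_act w.
Proof.
elim: w => [|i w IHw] x; first by rewrite /word3 big_nil perm1.
by rewrite /word3 big_cons permM -/(word3 w) IHw move3E ?face_in_faces.
Qed.

Lemma word3_G3 w : word3 w \in G3.
Proof. by apply: group_prod => i _; apply: mem_gen; rewrite faces_gens map_f ?face_in_faces. Qed.

Definition EdgeParity : {set {perm St3}} :=
  [set g in CornerStab |
    [forall e, g (inr e) == inr (if odd_perm (psi g) then edge_swap e else e)]].

Lemma group_set_EdgeParity : group_set EdgeParity.
Proof.
apply/group_setP; split.
  by apply/setIdP; split; [exact: group1 | apply/forallP => e; rewrite psi1 odd_perm1 perm1].
move=> g h /setIdP[gS /forallP g_e] /setIdP[hS /forallP h_e].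
apply/setIdP; split; first exact: groupM.
apply/forallP => e; rewrite permM (eqP (g_e e)) (eqP (h_e _)) psiM // odd_permM.
by case: (odd_perm (psi g)); case: (odd_perm (psi h)); rewrite //= edge_swapK.
Qed.
Canonical EdgeParity_group := Group group_set_EdgeParity.

Definition Upright : {set {perm St3}} :=
  [set g in CornerStab | [forall c, upright c ==> upright (psi g c)]].

Lemma group_set_Upright : group_set Upright.
Proof.
apply/group_setP; split.
  by apply/setIdP; split; [exact: group1 | apply/forallP => c; rewrite psi1 perm1 implybb].
move=> g h /setIdP[gS /forallP g_up] /setIdP[hS /forallP h_up].
apply/setIdP; split; first exact: groupM.
apply/forallP => c; rewrite psiM // permM.
by apply/implyP => /(implyP (g_up c)) /(implyP (h_up _)).
Qed.
Canonical Upright_group := Group group_set_Upright.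

Definition H3 : {group {perm St3}} := (G3 :&: EdgeParity)%G.
Definition QS : {group {perm St3}} := (H3 :&: Upright)%G.

Lemma H3_sub_G3 : H3 \subset G3.
Proof. exact: subsetIl. Qed.

Lemma QS_sub_H3 : QS \subset H3.
Proof. exact: subsetIl. Qed.

Lemma H3_sub_CornerStab : H3 \subset CornerStab.
Proof. exact: subset_trans H3_sub_G3 G3_sub_CornerStab. Qed.

Lemma H3_edges g : g \in H3 ->
  forall e, g (inr e) = inr (if odd_perm (corner_perm g) then edge_swap e else e).
Proof. by case/setIP => gG3 /setIdP[_ /forallP g_e] e; rewrite -odd_psi //; apply/eqP. Qed.

Lemma mem_H3 g : g \in G3 ->
  (forall e, g (inr e) = inr (if odd_perm (corner_perm g) then edge_swap e else e)) ->
  g \in H3.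
Proof.
move=> gG3 g_e; apply/setIP; split => //; apply/setIdP; split.
  exact: subsetP G3_sub_CornerStab g gG3.
by apply/forallP => e; rewrite odd_psi // g_e.
Qed.

Lemma Lsub_fix g : g \in G3 ->
  (g \in Lsub) = [forall e, g (inr e) == inr e] && (corner_perm g == 1).
Proof.
move=> gG3; rewrite inE gG3 /=; congr (_ && _).
have gS := subsetP G3_sub_CornerStab g gG3.
apply/forallP/(corner_perm1P gG3) => [g_c c | fix_pos c].
  by have := g_c c; rewrite CornerStabE //= => /eqP.
by rewrite CornerStabE //= fix_pos.
Qed.

Lemma Lsub_ker : Lsub = 'ker_H3 corner_perm_morphism.
Proof.
apply/setP => g; rewrite in_setI; apply/idP/andP => [gL | [gH g_ker]].
  have gG3 : g \in G3 by case/setIdP: gL.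
  move: gL; rewrite Lsub_fix // => /andP[/forallP g_e /eqP g1].
  split; last exact/(kerP _ gG3).
  by apply: mem_H3 => // e; rewrite g1 odd_perm1; apply/eqP.
have gG3 := subsetP H3_sub_G3 g gH; have /(kerP _ gG3) g1 := g_ker.
rewrite Lsub_fix // [corner_perm g]g1 eqxx andbT.
by apply/forallP => e; rewrite H3_edges // g1 odd_perm1.
Qed.

Lemma ker_QS : 'ker_H3 corner_perm_morphism :&: QS = 1.
Proof.
apply/trivgP/subsetP => g /setIP[gK /setIP[gH /setIdP[_ /forallP g_up]]].
have gG3 := subsetP H3_sub_G3 g gH; have gS := subsetP G3_sub_CornerStab g gG3.
have : g \in Lsub by rewrite Lsub_ker.
rewrite Lsub_fix // => /andP[/forallP g_e /eqP g1].
have psi_g1 : psi g = 1.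
  by apply: Rigid2_trivial (psi_G3_Rigid2 gG3) g1 _ => c; apply/implyP.
rewrite inE; apply/eqP/permP => -[c|e]; rewrite perm1; last exact/eqP.
by rewrite CornerStabE // psi_g1 perm1.
Qed.

Lemma tperm_lift x : exists2 q, q \in QS & corner_perm q = tperm corner0 x.
Proof.
case/orP: (tperm_lifts_cover x) => [/eqP-> | /mapP[[y w] d_in /= ->]].
  by exists 1; rewrite ?group1 // /corner_perm psi1 phi1 tperm1.
have /and3P[y_ne0 /all_stickersP w_corners /all_stickersP w_edges] :=
  allP tperm_lifts_certified _ d_in.
have qG3 := word3_G3 w; have qS := subsetP G3_sub_CornerStab _ qG3.
have q_corner c : (upright c ==> upright (psi (word3 w) c)) &&
                  (cubelet (psi (word3 w) c) == swaps [:: (corner0, y)] (cubelet c)).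
  by move: (w_corners c); rewrite -word3E CornerStabE.
have q_perm : corner_perm (word3 w) = tperm corner0 y.
  apply/permP => p; rewrite -(cubelet_corner_rep p) /corner_perm phi_cubelet; last first.
    exact: cubelet_preserving_psi.
  by have /andP[_ /eqP->] := q_corner (corner_rep p); rewrite -prod_tpermE big_seq1.
have qH : word3 w \in H3.
  apply: mem_H3 => // e; rewrite q_perm odd_tperm eq_sym y_ne0 word3E.
  exact/eqP/w_edges.
exists (word3 w) => //; apply/setIP; split => //; apply/setIdP; split => //.
by apply/forallP => c; case/andP: (q_corner c).
Qed.

Lemma corner_perm_QS : corner_perm_morphism @* QS = [set: {perm CP}].
Proof.
apply/eqP; rewrite eqEsubset subsetT -(gen_tperm corner0) gen_subG.
apply/subsetP => _ /imsetP[x _ ->]; have [q qQ <-] := tperm_lift x.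
have qG3 : q \in G3 by apply: subsetP H3_sub_G3 q (subsetP QS_sub_H3 q qQ).
exact: mem_morphim qG3 qQ.
Qed.

Lemma face_lift m : m \in faces -> exists2 h, h \in H3 & psi h = move2 m.
Proof.
move=> m_face; have odd_m := odd_move2 m_face; have m_turn := move2E m_face.
case/face_certificate: m_face => ts [ps [w /and5P[_ _ _ _]]].
case/and5P=> _ _ _ /all_stickersP w_c /all_stickersP w_e.
have hG3 := word3_G3 w; have hS := subsetP G3_sub_CornerStab _ hG3.
have psi_h : psi (word3 w) = move2 m.
  apply/permP => c; rewrite [RHS]m_turn; apply: (@inl_inj CS ES).
  by rewrite -CornerStabE // word3E; apply/eqP/w_c.
exists (word3 w) => //; apply: mem_H3 => // e.
by rewrite -odd_psi // psi_h odd_m word3E; apply/eqP/w_e.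
Qed.

Lemma psi_H3 : psi @: H3 = G2.
Proof.
rewrite -morphimEsub ?H3_sub_CornerStab //; apply/eqP.
rewrite eqEsubset -{1}psi_G3 morphimS ?H3_sub_G3 //=.
rewrite gen_subG; apply/subsetP => x; rewrite faces_gens => /mapP[m m_face ->].
have [h hH <-] := face_lift m_face.
exact: mem_morphim (subsetP H3_sub_CornerStab h hH) hH.
Qed.

Lemma psi_inj_H3 : {in H3 &, injective psi}.
Proof.
move=> g h gH hH eq_gh; apply/permP => -[c|e].
  have [gS hS] := (subsetP H3_sub_CornerStab g gH, subsetP H3_sub_CornerStab h hH).
  by rewrite (CornerStabE c gS) (CornerStabE c hS) eq_gh.
by rewrite (H3_edges gH e) (H3_edges hH e) /corner_perm eq_gh.
Qed.

Lemma beta_H3 g : g \in H3 -> beta g = sigma (corner_perm g).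
Proof.
move/H3_edges; rewrite /sigma; case: (odd_perm _) => /= g_e; rewrite (beta_induced g_e).
  rewrite -(mkperm_perm (tperm pos_b pos_c)); apply: eq_mkperm => p.
  by rewrite -cubelet_edge_swap -{1}(cubelet_edge_rep p) inducedE //; apply: edge_swap_pos.
rewrite -(mkperm_perm 1); apply: eq_mkperm => p.
by rewrite perm1 -{1}(cubelet_edge_rep p) inducedE // cubelet_edge_rep.
Qed.

Lemma alpha_QS : [set alpha q | q in QS] = Sset.
Proof.
apply/setP => x; apply/imsetP/imsetP => [[q qQ ->] | [p _ ->]].
  by exists (corner_perm q) => //; rewrite /alpha beta_H3 // (subsetP QS_sub_H3 q qQ).
have : p \in corner_perm_morphism @* QS by rewrite corner_perm_QS inE.
case/morphimP => q _ qQ ->; exists q => //.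
by rewrite /alpha beta_H3 // (subsetP QS_sub_H3 q qQ).
Qed.

Lemma QS_kerAlpha : QS :&: kerAlpha = 1.
Proof.
apply/eqP; rewrite eqEsubset; apply/andP; split.
  rewrite -ker_QS; apply/subsetP => q /setIP[qQ /setIdP[qG3 /eqP[_ q1]]].
  apply/setIP; split => //; apply/setIP; split; first exact: subsetP QS_sub_H3 q qQ.
  exact/(kerP _ qG3).
rewrite sub1set; apply/setIP; split; first exact: group1.
rewrite inE group1 /alpha beta_H3 ?group1 // /corner_perm psi1 phi1.
by rewrite /sigma odd_perm1 eqxx.
Qed.

Theorem theorem3p10 :
  exists Q H : {group {perm St3}},
    (* Q_S : a subgroup of G3 meeting ker alpha trivially, with alpha(Q_S) = S *)
    [/\ Q \subset G3, (Q :&: kerAlpha = 1)%g & [set alpha q | q in Q] = Sset] /\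
    (* H = L x| Q_S is a subgroup of G3 *)
    (Lsub ><| Q = H)%g /\ H \subset G3 /\
    (* psi restricts to an isomorphism from H onto G2 *)
    [/\ {in H &, {morph psi : x y / (x * y)%g}},
        {in H &, injective psi}
      & psi @: H = G2].
Proof.
exists QS, H3; split.
  split; [exact: subset_trans QS_sub_H3 H3_sub_G3 | exact: QS_kerAlpha | exact: alpha_QS].
split.
  rewrite Lsub_ker; apply: sdprod_ker_complement H3_sub_G3 QS_sub_H3 ker_QS _.
  by apply/eqP; rewrite eqEsubset morphimS ?QS_sub_H3 //= corner_perm_QS subsetT.
split; first exact: H3_sub_G3.
split; [ | exact: psi_inj_H3 | exact: psi_H3].
by move=> g h /(subsetP H3_sub_CornerStab) gS /(subsetP H3_sub_CornerStab) hS; apply: psiM.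
Qed.
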